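(* Let $n=2k$ and let $u_1,\ldots,u_k$ be pairwise distinct elements of $\mathbb{F}_{2^n}$ such that $u_iu_j^{2^k}\in\mathbb{F}_{2^k}^*$ for all $1\le i<j\le k$. Let $t$ be a positive integer, $F_1,\ldots,F_t$ reduced polynomials in $\mathbb{F}_2[X_1,\ldots,X_k]$, $f_i(x)=F_i(\mathrm{Tr}^n_1(u_1x),\ldots,\mathrm{Tr}^n_1(u_kx))$, and $\widehat H(x)=(x^{2^k+1},f_1(x),\ldots,f_t(x))$. Then for $(u,v)\in(\mathbb{F}_{2^k}\times\mathbb{F}_2^t)\setminus\{(0,0)\}$, the component $\langle(u,v),\widehat H(x)\rangle$ is bent if and only if $u\neq0$. In particular, $\widehat H$ has exactly $2^{k+t}-2^t$ bent components (the maximal number of bent components of a $(2k,k+t)$-function), and for every $v\in\mathbb{F}_2^t$ the function $\sum_{i=1}^t v_if_i$ is not bent.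
   Context: $\mathrm{Tr}^n_1(x)=\sum_{i=0}^{n-1}x^{2^i}$; $\langle(u,v),\widehat H(x)\rangle=\mathrm{Tr}^k_1(ux^{2^k+1})+\sum_{i=1}^tv_if_i(x)$. A Boolean function $f$ on $\mathbb{F}_{2^n}$ is bent if $|\sum_x(-1)^{f(x)+\mathrm{Tr}^n_1(ax)}|=2^{n/2}$ for all $a$. A reduced polynomial is a multilinear polynomial over $\mathbb{F}_2$. *)

From HB Require Import structures.
From mathcomp Require Import all_boot all_order all_algebra all_field.
From mathcomp Require Import mpoly.
Set Implicit Arguments. Unset Strict Implicit. Unset Printing Implicit Defensive.
Import Order.TTheory GRing.Theory Num.Theory.
Local Open Scope ring_scope.

Definition trace (F : finFieldType) (m : nat) (x : F) : F :=
  \sum_(i < m) x ^+ (2 ^ i).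

(* Boolean value of a trace (the trace lies in F_2 = {0,1} when it is
   applied to an element of F_(2^m)). *)
Definition trb (F : finFieldType) (m : nat) (x : F) : bool := trace m x == 1.

Definition in_subfield (F : finFieldType) (k : nat) (x : F) : bool :=
  x ^+ (2 ^ k) == x.

Definition walsh (F : finFieldType) (n : nat) (f : F -> bool) (a : F) : int :=
  \sum_(x : F) (-1) ^+ (f x (+) trb n (a * x)).

Definition bent (F : finFieldType) (n : nat) (f : F -> bool) : bool :=
  [forall a : F, `|walsh n f a| == (2 ^ (n %/ 2))%:Z].

Definition reduced (k : nat) (P : {mpoly 'F_2[k]}) : bool :=
  all (fun m : 'X_{1..k} => [forall j : 'I_k, m j <= 1]%N) (msupp P).

Definition f2b (b : 'F_2) : bool := b == 1.

Definition fcomp (F : finFieldType) (n k : nat) (u : 'I_k -> F)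
  (P : {mpoly 'F_2[k]}) (x : F) : bool :=
  f2b (P.@[fun j : 'I_k => (trb n (u j * x) : nat)%:R]).

(* The component <(u,v), H^(x)> = Tr^k_1(u x^(2^k+1)) + \sum_i v_i f_i(x). *)
Definition component (F : finFieldType) (n k t : nat) (us : 'I_k -> F)
  (Ps : 'I_t -> {mpoly 'F_2[k]}) (u : F) (v : 'I_t -> bool) (x : F) : bool :=
  trb k (u * x ^+ (2 ^ k + 1)) (+)
  \big[addb/false]_(i < t) (v i && fcomp n us (Ps i) x).

Definition vsum (F : finFieldType) (n k t : nat) (us : 'I_k -> F)
  (Ps : 'I_t -> {mpoly 'F_2[k]}) (v : 'I_t -> bool) (x : F) : bool :=
  \big[addb/false]_(i < t) (v i && fcomp n us (Ps i) x).

(* Write Q_u(x) = Tr^k_1(u x^(2^k+1)) and g_v = sum_i v_i f_i.  For u in F_(2^k)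
   the derivative of Q_u in direction z is Tr^n_1(u z^(2^k) x) + Q_u(z), and g_v is
   invariant under translation by any w with Tr^n_1(u_j w) = 0 for all j.  For
   u <> 0 the elements w_i = (u_i / u)^(2^k) are such translations, because
   u_j u_i^(2^k) lies in F_(2^k), where Tr^n_1 vanishes.  So for z <> 0 the
   derivative of Q_u + g_v is balanced: if Tr^n_1(u_j z) = 0 for all j it is a
   nonconstant affine function, and otherwise Tr^n_1(u_j z) = 1 for some j and
   translation by w_j complements it.  Bentness follows from
   W_f(a)^2 = sum_z (-1)^Tr(a z) sum_x (-1)^(f(x+z) + f(x)).  For u = 0 the
   component g_v has a nonzero translation invariance, so some W_f(a) vanishes. *)

From mathcomp Require Import all_boot all_order all_algebra all_field.
From mathcomp Require Import mpoly.
From mathcomp Require Import ring.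
Set Implicit Arguments. Unset Strict Implicit. Unset Printing Implicit Defensive.
Import GRing.Theory Num.Theory.
Local Open Scope ring_scope.

Lemma sqrf_eq_id (R : idomainType) (a : R) : a ^+ 2 = a -> a = 0 \/ a = 1.
Proof.
move=> a_idem; have : a * (a - 1) == 0 by rewrite mulrBr mulr1 -expr2 a_idem subrr.
by rewrite mulf_eq0 subr_eq0 => /orP[] /eqP; [left | right].
Qed.

Lemma card_roots_lt_size (F : finFieldType) (p : {poly F}) :
  p != 0 -> (#|[pred x | root p x]| < size p)%N.
Proof.
move=> p_neq0; rewrite cardE; apply: max_poly_roots => //; last exact: enum_uniq.
by apply/allP => x; rewrite mem_enum.
Qed.

Section CharTwo.
Variable F : finFieldType.
Hypothesis pcharF : (2 \in [pchar F])%N.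

Lemma exprD_pow2 i (x y : F) : (x + y) ^+ (2 ^ i) = x ^+ (2 ^ i) + y ^+ (2 ^ i).
Proof. by rewrite exprDn_pchar // pnatX pnatE ?pcharF. Qed.

Lemma trace0 m : trace m (0 : F) = 0.
Proof. by rewrite /trace big1 // => i _; rewrite expr0n expn_eq0. Qed.

Lemma traceD m : {morph @trace F m : x y / x + y}.
Proof. by move=> x y; rewrite /trace -big_split; apply: eq_bigr => i _; rewrite exprD_pow2. Qed.

Lemma trace1 (x : F) : trace 1 x = x.
Proof. by rewrite /trace big_ord1 expr1. Qed.

Lemma trace_cat m1 m2 (x : F) :
  trace (m1 + m2) x = trace m1 x + trace m2 (x ^+ (2 ^ m1)).
Proof.
by rewrite /trace big_split_ord; congr (_ + _); apply: eq_bigr => i _; rewrite -exprM -expnD.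
Qed.

Lemma trace_exp_pow2 m i (x : F) : trace m x ^+ (2 ^ i) = trace m (x ^+ (2 ^ i)).
Proof.
have zero_pow2 : (0 : F) ^+ (2 ^ i) = 0 by rewrite expr0n expn_eq0.
rewrite /trace (big_morph (fun y : F => y ^+ (2 ^ i)) (exprD_pow2 i) zero_pow2).
by apply: eq_bigr => j _; rewrite -!exprM mulnC.
Qed.

Lemma trace_sqr_fixed m (x : F) : x ^+ (2 ^ m) = x -> trace m x ^+ 2 = trace m x.
Proof.
move=> x_fixed; rewrite -(expn1 2) trace_exp_pow2.
have := trace_cat 1 m x; rewrite addnC trace_cat !trace1 x_fixed [LHS]addrC.
by move/addrI.
Qed.

Lemma trbD_bits m (x y : F) :
  trace m x ^+ 2 = trace m x -> trace m y ^+ 2 = trace m y ->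
  trb m (x + y) = trb m x (+) trb m y.
Proof.
rewrite /trb traceD => /sqrf_eq_id[]-> /sqrf_eq_id[]->;
  by rewrite ?addr0 ?add0r ?addrr_pchar2 // ?eqxx eq_sym oner_eq0.
Qed.

End CharTwo.

Definition derivb (F : finFieldType) (f : F -> bool) (z x : F) : bool := f (x + z) (+) f x.

Definition balanced (T : finType) (g : T -> bool) : Prop :=
  \sum_(x : T) (-1) ^+ g x = 0 :> int.

Lemma derivb_shift (F : finFieldType) (f : F -> bool) (w z x : F) :
  (forall y, f (y + w) = f y) -> derivb f z (x + w) = derivb f z x.
Proof. by move=> f_w; rewrite /derivb addrAC !f_w. Qed.

Lemma balanced_of_shift_neg (V : finZmodType) (g : V -> bool) (w : V) :
  (forall x, g (x + w) = ~~ g x) -> balanced g.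
Proof.
move=> g_shift; suff /eqP : (\sum_(x : V) (-1) ^+ g x) *+ 2 = 0 :> int.
  by rewrite mulrn_eq0 => /eqP.
rewrite mulr2n [X in _ + X](reindex_inj (addIr w)) -big_split /= big1 // => x _.
by rewrite g_shift; case: (g x); rewrite ?expr0 ?expr1 ?subrr ?addNr.
Qed.

Lemma bent_eq (F : finFieldType) m (f g : F -> bool) : f =1 g -> bent m f = bent m g.
Proof.
by move=> fg; apply: eq_forallb => a; rewrite /walsh; under eq_bigr => x _ do rewrite fg.
Qed.

Definition trace_poly (R : nzRingType) (m : nat) : {poly R} := \sum_(i < m) 'X^(2 ^ i).

Lemma horner_trace_poly (F : finFieldType) m (x : F) : (trace_poly F m).[x] = trace m x.
Proof. by rewrite horner_sum; apply: eq_bigr => i _; rewrite hornerXn. Qed.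

Lemma coef1_trace_poly (R : nzRingType) m : (0 < m)%N -> (trace_poly R m)`_1 = 1.
Proof.
case: m => // m _; rewrite coef_sum big_ord_recl coefXn expn0 eqxx big1 ?addr0 // => i _.
by rewrite coefXn ltn_eqF // -{1}(expn0 2) ltn_exp2l.
Qed.

Lemma size_trace_poly (R : nzRingType) m : (size (trace_poly R m) <= (2 ^ m.-1).+1)%N.
Proof.
apply: leq_trans (size_sum _ _ _) _; apply/bigmax_leqP => i _.
by rewrite size_polyXn ltnS leq_pexp2l // -ltnS (ltn_predK (ltn_ord i)).
Qed.

Section FiniteField.
Variables (F : finFieldType) (n : nat).
Hypothesis cardF : #|F| = (2 ^ n)%N.

Lemma pchar2_card : (2 \in [pchar F])%N.
Proof. exact: card_finPcharP cardF _. Qed.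

Lemma expf_pow2_card (x : F) : x ^+ (2 ^ n) = x.
Proof. by rewrite -cardF expf_card. Qed.

Lemma trace_sqr (x : F) : trace n x ^+ 2 = trace n x.
Proof. exact: trace_sqr_fixed pchar2_card _ _ (expf_pow2_card x). Qed.

Lemma trace_eq01 (x : F) : trace n x = 0 \/ trace n x = 1.
Proof. exact: sqrf_eq_id (trace_sqr x). Qed.

Lemma trbD (x y : F) : trb n (x + y) = trb n x (+) trb n y.
Proof. exact: trbD_bits pchar2_card _ _ _ (trace_sqr x) (trace_sqr y). Qed.

Lemma trace_exp_pow2_id i (x : F) : trace n (x ^+ (2 ^ i)) = trace n x.
Proof.
rewrite -trace_exp_pow2 ?pchar2_card //.
by case: (trace_eq01 x) => ->; rewrite ?expr1n // expr0n expn_eq0.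
Qed.

Lemma exists_trace1 : (0 < n)%N -> exists y : F, trace n y = 1.
Proof.
(* A nonzero polynomial of size at most 2^(n-1) + 1 <= #|F| cannot vanish on all of F. *)
move=> n_gt0; have tp_neq0 : trace_poly F n != 0.
  by apply/eqP=> /(congr1 (coefp 1)) /eqP; rewrite /= coef1_trace_poly // coef0 oner_eq0.
case: (pickP (fun y : F => trace n y == 1)) => [y /eqP | trace_neq1]; first by exists y.
have := leq_trans (card_roots_lt_size tp_neq0) (size_trace_poly F n).
have -> : #|[pred x | root (trace_poly F n) x]| = #|F|.
  apply: eq_card => x; rewrite !inE /root horner_trace_poly.
  by have := trace_neq1 x; case: (trace_eq01 x) => /= ->; rewrite eqxx.
by rewrite cardF ltnS leqNgt ltn_exp2l // ltn_predL n_gt0.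
Qed.

Lemma walsh_sqr (f : F -> bool) (a : F) :
  walsh n f a ^+ 2 = \sum_(z : F) (-1) ^+ trb n (a * z) * \sum_(x : F) (-1) ^+ derivb f z x.
Proof.
rewrite expr2 /walsh mulr_suml.
under eq_bigr => x _ do rewrite mulr_sumr (reindex_inj (addrI x)).
rewrite exchange_big /=; apply: eq_bigr => z _; rewrite mulr_sumr; apply: eq_bigr => x _.
rewrite -!signr_addb mulrDr trbD /derivb.
by case: (f x); case: (f (x + z)); case: (trb n (a * x)); case: (trb n (a * z)).
Qed.

Lemma bent_of_balanced_derivb (f : F -> bool) :
  ~~ odd n -> (forall z, z != 0 -> balanced (derivb f z)) -> bent n f.
Proof.
move=> n_even bal; apply/forallP => a; rewrite -(eqrXn2 (isT : (0 < 2)%N)) ?normr_ge0 //.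
rewrite real_normK ?num_real // walsh_sqr (bigD1 0) //= [X in _ + X]big1 => [|z /bal].
  rewrite mulr0 addr0 /trb trace0 (eq_sym 0) oner_eq0 mul1r.
  under eq_bigr => x _ do rewrite /derivb addr0 addbb expr0.
  by rewrite sumr_const cardF -natz -natrX -expnM divnK ?dvdn2.
by rewrite /balanced => ->; rewrite mulr0.
Qed.

Lemma not_bent_of_shift_invariant (f : F -> bool) (w : F) :
  (0 < n)%N -> w != 0 -> (forall x, f (x + w) = f x) -> ~~ bent n f.
Proof.
move=> n_gt0 w_neq0 f_w; have [y tr_y] := exists_trace1 n_gt0.
apply/forallP => /(_ (y / w)); rewrite /walsh (balanced_of_shift_neg (w := w)) => [|x].
  by rewrite normr0 eq_sym -natz pnatr_eq0 expn_eq0.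
by rewrite f_w mulrDr trbD divfK // /trb tr_y eqxx addbT addbN.
Qed.

End FiniteField.

Section HalfSubfield.
Variables (F : finFieldType) (k : nat).
Hypothesis cardF : #|F| = (2 ^ (k + k))%N.

Local Notation n := (k + k)%N.
Let pcharF := pchar2_card cardF.

Lemma k_gt0 : (0 < k)%N.
Proof.
have : (1 < #|F|)%N by apply/card_gt1P; exists 0, 1; rewrite eq_sym oner_neq0.
by rewrite cardF -{1}(expn0 2) ltn_exp2l // addn_gt0 orbb.
Qed.

Lemma frobk_invol (x : F) : x ^+ (2 ^ k) ^+ (2 ^ k) = x.
Proof. by rewrite -exprM -expnD expf_pow2_card. Qed.

Lemma in_subfield1 : in_subfield k (1 : F).
Proof. by rewrite /in_subfield expr1n. Qed.

Lemma in_subfieldD (a b : F) : in_subfield k a -> in_subfield k b -> in_subfield k (a + b).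
Proof. by move=> /eqP a_fixed /eqP b_fixed; rewrite /in_subfield exprD_pow2 // a_fixed b_fixed. Qed.

Lemma in_subfieldM (a b : F) : in_subfield k a -> in_subfield k b -> in_subfield k (a * b).
Proof. by move=> /eqP a_fixed /eqP b_fixed; rewrite /in_subfield exprMn a_fixed b_fixed. Qed.

Lemma in_subfieldV (a : F) : in_subfield k a -> in_subfield k a^-1.
Proof. by move=> /eqP a_fixed; rewrite /in_subfield exprVn a_fixed. Qed.

Lemma in_subfield_reltrace (x : F) : in_subfield k (x + x ^+ (2 ^ k)).
Proof. by rewrite /in_subfield exprD_pow2 // frobk_invol addrC. Qed.

Lemma in_subfield_norm (x : F) : in_subfield k (x ^+ (2 ^ k + 1)).
Proof. by rewrite /in_subfield exprD expr1 exprMn frobk_invol mulrC. Qed.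

Lemma trace_in_subfield (y : F) : in_subfield k y -> trace n y = 0.
Proof. by move=> /eqP y_fixed; rewrite trace_cat // y_fixed addrr_pchar2. Qed.

Lemma trbD_subfield (a b : F) : in_subfield k a -> in_subfield k b ->
  trb k (a + b) = trb k a (+) trb k b.
Proof. by move=> /eqP a_fixed /eqP b_fixed; apply: trbD_bits; rewrite // trace_sqr_fixed. Qed.

Lemma card_reltrace_fiber (y : F) : (#|[pred x : F | (x ^+ (2 ^ k) + x == y)%R]| <= 2 ^ k)%N.
Proof.
pose q : {poly F} := 'X^(2 ^ k) + 'X - y%:P.
have size_q : size q = (2 ^ k).+1.
  rewrite /q -addrA size_polyDl size_polyXn // size_XsubC ltnS.
  by rewrite (leq_trans _ (ltn_expl k (isT : (1 < 2)%N))) // ltnS k_gt0.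
have q_neq0 : q != 0 by rewrite -size_poly_eq0 size_q.
rewrite -ltnS -size_q; apply: leq_ltn_trans (card_roots_lt_size q_neq0).
apply: subset_leq_card; apply/subsetP => x; rewrite !inE /root /q !hornerE.
by move=> /eqP ->; rewrite subrr.
Qed.

Lemma card_subfield : #|[pred x : F | in_subfield k x]| = (2 ^ k)%N.
Proof.
apply/eqP; rewrite eqn_leq; apply/andP; split.
  apply: leq_trans (card_reltrace_fiber 0); apply: subset_leq_card.
  by apply/subsetP => x; rewrite !inE /in_subfield addr_eq0 oppr_pchar2.
(* x |-> x^(2^k) + x maps F into the subfield, with fibers of size at most 2^k. *)
pose phi (x : F) := x ^+ (2 ^ k) + x.
have : (2 ^ k * 2 ^ k <= #|[pred x : F | in_subfield k x]| * 2 ^ k)%N.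
  rewrite -expnD -cardF -sum1_card -sum_nat_const.
  rewrite (partition_big phi [pred x : F | in_subfield k x]) => [|x _]; last first.
    by rewrite /= /phi addrC in_subfield_reltrace.
  apply: leq_sum => y _; apply: leq_trans (card_reltrace_fiber y).
  by rewrite -sum1_card; apply: eq_leq; apply: eq_bigl.
by rewrite leq_pmul2r // expn_gt0.
Qed.

Lemma trb_norm_polarization (u x z : F) : in_subfield k u ->
  trb k (u * (x + z) ^+ (2 ^ k + 1)) =
  trb k (u * x ^+ (2 ^ k + 1)) (+) trb k (u * z ^+ (2 ^ k + 1)) (+) trb n (u * z ^+ (2 ^ k) * x).
Proof.
move=> u_in; set y := u * z ^+ (2 ^ k) * x.
have expand : u * (x + z) ^+ (2 ^ k + 1) =
    (u * x ^+ (2 ^ k + 1) + u * z ^+ (2 ^ k + 1)) + (y + y ^+ (2 ^ k)).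
  rewrite /y !exprMn frobk_invol (eqP u_in) !exprD !expr1 exprD_pow2 //.
  set X := x ^+ (2 ^ k); set Z := z ^+ (2 ^ k); ring.
have norm_in w : in_subfield k (u * w ^+ (2 ^ k + 1)) by rewrite in_subfieldM ?in_subfield_norm.
rewrite expand (trbD_subfield (in_subfieldD (norm_in x) (norm_in z)) (in_subfield_reltrace y)).
by rewrite (trbD_subfield (norm_in x) (norm_in z)) {3}/trb traceD // -trace_cat.
Qed.

Variables (t : nat) (us : 'I_k -> F) (Ps : 'I_t -> {mpoly 'F_2[k]}).
Hypothesis us_pairs : forall i j : 'I_k, (i < j)%N ->
  in_subfield k (us i * us j ^+ (2 ^ k)) /\ us i * us j ^+ (2 ^ k) != 0.

Definition us_orthogonal (w : F) : Prop := forall j, trace n (us j * w) = 0.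

Lemma fcomp_shift (P : {mpoly 'F_2[k]}) (w : F) :
  us_orthogonal w -> forall x, fcomp n us P (x + w) = fcomp n us P x.
Proof.
move=> w_orth x; rewrite /fcomp !mevalE; congr f2b; apply: eq_bigr => m _.
congr (_ * _); apply: eq_bigr => j _.
by rewrite /trb mulrDr traceD // w_orth addr0.
Qed.

Lemma vsum_shift (v : 'I_t -> bool) (w : F) :
  us_orthogonal w -> forall x, vsum n us Ps v (x + w) = vsum n us Ps v x.
Proof. by move=> w_orth x; apply: eq_bigr => i _; rewrite fcomp_shift. Qed.

Lemma derivb_vsum_orthogonal (v : 'I_t -> bool) (z x : F) :
  us_orthogonal z -> derivb (vsum n us Ps v) z x = false.
Proof. by move=> z_orth; rewrite /derivb vsum_shift // addbb. Qed.

Lemma in_subfield_pair (i j : 'I_k) : in_subfield k (us j * us i ^+ (2 ^ k)).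
Proof.
case: (ltngtP i j) => [lt_ij | lt_ji | /val_inj->]; last first.
- by rewrite mulrC -exprSr -addn1 in_subfield_norm.
- exact: (us_pairs lt_ji).1.
have [pair_in _] := us_pairs lt_ij.
by rewrite -[us j]frobk_invol -exprMn mulrC (eqP pair_in).
Qed.

Lemma us_orthogonal_conj (u : F) (i : 'I_k) :
  in_subfield k u -> u != 0 -> us_orthogonal ((us i / u) ^+ (2 ^ k)).
Proof.
move=> u_in u_neq0 j; rewrite exprMn exprVn (eqP u_in) mulrA.
by rewrite trace_in_subfield // in_subfieldM ?in_subfield_pair ?in_subfieldV.
Qed.

Lemma us_orthogonalP (z : F) : us_orthogonal z \/ exists j, trace n (us j * z) = 1.
Proof.
case: (pickP (fun j => trace n (us j * z) == 1)) => [j /eqP | trace_neq1]; first by right; exists j.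
left => j; case: (trace_eq01 cardF (us j * z)) => // tr1.
by move: (trace_neq1 j); rewrite /= tr1 eqxx.
Qed.

Lemma componentE (u : F) (v : 'I_t -> bool) (x : F) :
  component n us Ps u v x = trb k (u * x ^+ (2 ^ k + 1)) (+) vsum n us Ps v x.
Proof. by []. Qed.

Lemma derivb_component (u : F) (v : 'I_t -> bool) (z x : F) : in_subfield k u ->
  derivb (component n us Ps u v) z x =
  trb n (u * z ^+ (2 ^ k) * x) (+) trb k (u * z ^+ (2 ^ k + 1)) (+) derivb (vsum n us Ps v) z x.
Proof.
move=> u_in; rewrite /derivb !componentE trb_norm_polarization //.
by case: (trb k (u * x ^+ _)); case: (trb k (u * z ^+ _)); case: (trb n _);
  case: (vsum _ _ _ _ (x + z)); case: (vsum _ _ _ _ x).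
Qed.

Lemma component_bent (u : F) (v : 'I_t -> bool) :
  in_subfield k u -> u != 0 -> bent n (component n us Ps u v).
Proof.
move=> u_in u_neq0; apply: (bent_of_balanced_derivb cardF) => [|z z_neq0].
  by rewrite addnn odd_double.
set c := u * z ^+ (2 ^ k).
have c_neq0 : c != 0 by rewrite mulf_neq0 // expf_neq0.
case: (us_orthogonalP z) => [z_orth | [j tr_j]].
  have [y tr_y] := exists_trace1 cardF (ltn_addl k k_gt0).
  apply: (balanced_of_shift_neg (w := y / c)) => x.
  rewrite !derivb_component // !derivb_vsum_orthogonal // -/c mulrDr trbD //.
  rewrite [c * (y / c)]mulrC divfK // [trb n y]/trb tr_y eqxx.
  by case: trb; case: trb.
have w_orth := us_orthogonal_conj j u_in u_neq0.
apply: (balanced_of_shift_neg (w := (us j / u) ^+ (2 ^ k))) => x.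
rewrite !derivb_component // (derivb_shift _ _ (vsum_shift _ w_orth)) mulrDr trbD //.
have -> : c * (us j / u) ^+ (2 ^ k) = (us j * z) ^+ (2 ^ k).
  rewrite /c exprMn exprVn (eqP u_in) exprMn.
  by set Z := z ^+ (2 ^ k); set U := us j ^+ (2 ^ k); field.
rewrite [trb n (_ ^+ _)]/trb trace_exp_pow2_id // tr_j eqxx.
by case: trb; case: trb; case: derivb.
Qed.

Lemma vsum_not_bent (v : 'I_t -> bool) : ~~ bent n (vsum n us Ps v).
Proof.
have [w w_neq0 w_orth] : exists2 w : F, w != 0 & us_orthogonal w.
  case: (pickP (fun j => us j != 0)) => [j us_j | us0].
    exists (us j ^+ (2 ^ k)); first by rewrite expf_neq0.
    by have := us_orthogonal_conj j in_subfield1 (oner_neq0 F); rewrite divr1.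
  by exists 1 => [|j]; rewrite ?oner_neq0 // (eqP (negbFE (us0 j))) mul0r trace0.
apply: (not_bent_of_shift_invariant cardF (ltn_addl k k_gt0) w_neq0).
exact: vsum_shift.
Qed.

Lemma component0 (v : 'I_t -> bool) : component n us Ps 0 v =1 vsum n us Ps v.
Proof. by move=> x; rewrite componentE mul0r /trb trace0 (eq_sym 0) oner_eq0. Qed.

Lemma card_bent_components :
  #|[set p : F * {ffun 'I_t -> bool} | in_subfield k p.1 && bent n (component n us Ps p.1 p.2)]|
  = (2 ^ (k + t) - 2 ^ t)%N.
Proof.
have -> : [set p : F * {ffun 'I_t -> bool} |
    in_subfield k p.1 && bent n (component n us Ps p.1 p.2)] =
    setX [set u : F | in_subfield k u && (u != 0)] [set: {ffun 'I_t -> bool}].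
  apply/setP => -[u v]; rewrite !inE /= andbT; case: (boolP (in_subfield k u)) => //= u_in.
  have [->|u_neq0] := eqVneq u 0; last exact: component_bent.
  by rewrite (bent_eq _ (component0 _)) (negbTE (vsum_not_bent _)).
have card_nonzero : #|[set u : F | in_subfield k u & u != 0]| = (2 ^ k - 1)%N.
  rewrite -card_subfield [in RHS](cardD1 0) inE /in_subfield expr0n expn_eq0 eqxx add1n subn1.
  by apply: eq_card => x; rewrite !inE andbC.
by rewrite cardsX cardsT card_ffun card_bool card_ord card_nonzero mulnBl mul1n expnD.
Qed.

End HalfSubfield.

Theorem corollary6 (F : finFieldType) (n k t : nat) (us : 'I_k -> F)
  (Ps : 'I_t -> {mpoly 'F_2[k]}) :
  n = (2 * k)%N ->
  #|F| = (2 ^ n)%N ->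
  injective us ->
  (forall i j : 'I_k, (i < j)%N ->
     in_subfield k (us i * us j ^+ (2 ^ k)) /\ us i * us j ^+ (2 ^ k) != 0) ->
  (0 < t)%N ->
  (forall i, reduced (Ps i)) ->
  (forall (u : F) (v : 'I_t -> bool), in_subfield k u ->
     (u != 0 \/ exists i, v i) ->
     (bent n (component n us Ps u v) <-> u != 0))
  /\ #|[set p : F * {ffun 'I_t -> bool} |
         in_subfield k p.1 && bent n (component n us Ps p.1 p.2)]|
     = (2 ^ (k + t) - 2 ^ t)%N
  /\ (forall v : 'I_t -> bool, ~~ bent n (vsum n us Ps v)).
Proof.
move=> -> cardF _ us_pairs _ _; rewrite mul2n -addnn in cardF *.
split; last split.
- move=> u v u_in _; split=> [|u_neq0]; last exact: component_bent.
  apply: contraTneq => ->; rewrite (bent_eq _ (component0 us Ps v)).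
  exact: vsum_not_bent.
- exact: card_bent_components.
- exact: vsum_not_bent.
Qed.
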